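(* Let $n\ge3$ and let $C_n=X(\mathbb{Z}_n,\{\pm1\})$ be the cycle graph on $n$ vertices. (i) If $n$ is odd, then $C_n$ does not admit perfect state transfer between distinct vertex type states. (ii) If $n=2l$ is even, then $C_n$ admits perfect state transfer from $d^*e_x$ to $d^*e_{x+l}$ (for every vertex $x$), and the minimum time at which it occurs is $l$.
   Context: For a graph with symmetric arc set $\mathcal{A}$ ($t((x,y))=y$, $(x,y)^{-1}=(y,x)$): boundary matrix $d_{x,a}=\frac{1}{\sqrt{\deg x}}\delta_{x,t(a)}$, shift matrix $R_{a,b}=\delta_{a,b^{-1}}$, Grover time evolution matrix $U=R(2d^*d-I_{\mathcal{A}})$; $e_x$ is the standard unit vector at vertex $x$ and $d^*e_x$ is a vertex type state. Perfect state transfer from a state $\Phi$ to a distinct state $\Psi$ at time $\tau\in\mathbb{Z}_{\ge1}$ means $U^\tau\Phi=\gamma\Psi$ for some $|\gamma|=1$. $X(\mathbb{Z}_n,S)$ denotes the circulant graph with vertex set $\mathbb{Z}_n$ and edges $\{x,y\}$ with $y-x\in S$. *)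

From HB Require Import structures.
From mathcomp Require Import all_boot all_order all_algebra algC.
Set Implicit Arguments. Unset Strict Implicit. Unset Printing Implicit Defensive.
Import Order.TTheory GRing.Theory Num.Theory.
Local Open Scope ring_scope.

Section Grover.
Variables (T : finType) (adj : rel T).

Definition arc := {p : T * T | adj p.1 p.2}.

Definition deg (x : T) : nat := #|[set y | adj x y]|.

Definition tv (a : arc) : T := (val a).2.

Definition bd (x : T) (a : arc) : algC :=
  if x == tv a then (sqrtC (deg x)%:R)^-1 else 0.

Definition shiftR (a b : arc) : algC :=
  (val a == ((val b).2, (val b).1))%:R.

Definition mxapply (M : arc -> arc -> algC) (v : arc -> algC) : arc -> algC :=
  fun a => \sum_b M a b * v b.

Definition coin (c b : arc) : algC :=
  2 * (\sum_x (bd x c)^* * bd x b) - (c == b)%:R.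

Definition Ugrover (a b : arc) : algC := \sum_c shiftR a c * coin c b.

Definition evolve (tau : nat) (Phi : arc -> algC) : arc -> algC :=
  iter tau (mxapply Ugrover) Phi.

(* vertex type state d^* e_x : (d^* e_x)(a) = conj (d_{x,a}) *)
Definition vstate (x : T) : arc -> algC := fun a => (bd x a)^*.

Definition PST (Phi Psi : arc -> algC) (tau : nat) : Prop :=
  (1 <= tau)%N /\
  exists gamma : algC, `|gamma| = 1 /\ forall a, evolve tau Phi a = gamma * Psi a.

End Grover.

Definition circulant (n : nat) (S : pred 'Z_n) : rel 'Z_n :=
  fun x y => (y - x) \in S.

Definition cycle_graph (n : nat) : rel 'Z_n :=
  circulant [pred s : 'Z_n | (s == 1) || (s == -1)].
Arguments circulant n S : clear implicits.
Arguments cycle_graph n : clear implicits.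
Arguments vstate {T} adj x.
Arguments PST {T adj} Phi Psi tau.
Arguments evolve {T adj} tau Phi.

From Pilot Require Import Defs.
From mathcomp Require Import all_boot all_order all_algebra algC.
From mathcomp Require Import ring zify.
Set Implicit Arguments. Unset Strict Implicit. Unset Printing Implicit Defensive.
Import Order.TTheory GRing.Theory Num.Theory.
Local Open Scope ring_scope.

(* On a 2-regular graph the coin 2 d^* d - I exchanges the two arcs entering
   each vertex, so U = R (2 d^* d - I) permutes the arcs.  On C_n it moves
   the arc (u, u + s) to (u - s, u): every arc travels backwards along its
   own direction s = +-1, and after t steps its head has moved by -t s.
   Hence U^t d^* e_x is proportional to d^* e_y exactly when x = y - t and
   x = y + t, i.e. when y = x + t and 2 t = 0 in Z_n.  For odd n this forces
   t = 0 in Z_n, hence y = x; for n = 2l it holds at t = l and at no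
   smaller positive time. *)

Lemma Zp_nat_eq0 (p k : nat) : (1 < p)%N -> ((k%:R : 'Z_p) == 0) = (p %| k)%N.
Proof. by move=> p_gt1; rewrite -val_eqE /= val_Zp_nat. Qed.

Lemma Zp_oner_neqN1 (p : nat) : (2 < p)%N -> (1 : 'Z_p) != -1.
Proof.
move=> p_gt2; rewrite -subr_eq0 opprK -mulr2n Zp_nat_eq0 ?(ltnW p_gt2) //.
by apply/negP => /(dvdn_leq (isT : (0 < 2)%N)); rewrite leqNgt p_gt2.
Qed.

Lemma conj_invsqrtC2 : ((sqrtC 2)^-1)^* = (sqrtC 2)^-1 :> algC.
Proof. by rewrite geC0_conj // invr_ge0 sqrtC_ge0 ler0n. Qed.

Lemma invsqrtC2_neq0 : (sqrtC 2)^-1 != 0 :> algC.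
Proof. by rewrite invr_eq0 sqrtC_eq0 pnatr_eq0. Qed.

Section GroverWalk.
Variables (T : finType) (adj : rel T).
Local Notation A := (Defs.arc adj).

Lemma mxapply_perm (M : A -> A -> algC) (f : A -> A) v a :
  (forall a b, M a b = (b == f a)%:R) -> mxapply M v a = v (f a).
Proof.
move=> Mf; rewrite /mxapply (bigD1 (f a)) //= big1 ?addr0 => [|b /negbTE nfb].
  by rewrite Mf eqxx mul1r.
by rewrite Mf nfb mul0r.
Qed.

Lemma evolve_perm (f : A -> A) :
    (forall a b, Ugrover a b = (b == f a)%:R) ->
  forall t v a, evolve t v a = v (iter t f a).
Proof.
move=> Uf t v; elim: t => [//|t IH] a.
by rewrite /evolve iterS (mxapply_perm _ _ Uf) iterSr -IH.
Qed.

Hypothesis adj_sym : symmetric adj.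

Definition arc_rev (a : A) : A :=
  exist _ ((val a).2, (val a).1) (etrans (adj_sym _ _) (valP a)).

Lemma Ugrover_rev (a b : A) : Ugrover a b = coin (arc_rev a) b.
Proof.
rewrite /Ugrover (bigD1 (arc_rev a)) //= big1 => [|c ca].
  by rewrite /shiftR /= -surjective_pairing eqxx mul1r addr0.
rewrite /shiftR; case: eqP => [ac|]; last by rewrite mul0r.
by case/negP: ca; apply/eqP/val_inj; rewrite /= ac; exact: surjective_pairing.
Qed.

Hypothesis deg2 : forall x, deg adj x = 2%N.

Lemma bd_deg2 (x : T) (a : A) : bd x a = (x == tv a)%:R * (sqrtC 2)^-1.
Proof. by rewrite /bd deg2; case: eqP; rewrite ?mul1r ?mul0r. Qed.

Lemma vstate_deg2 (x : T) (a : A) :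
  vstate adj x a = (x == tv a)%:R * (sqrtC 2)^-1.
Proof. by rewrite /vstate bd_deg2 rmorphM rmorph_nat /= conj_invsqrtC2. Qed.

Lemma coin_deg2 (c b : A) : coin c b = ((tv c == tv b) && (c != b))%:R.
Proof.
have half : 2 * ((sqrtC 2)^-1 * (sqrtC 2)^-1) = 1 :> algC.
  by rewrite -expr2 exprVn sqrtCK mulfV // pnatr_eq0.
rewrite /coin (bigD1 (tv c)) //= big1 => [|x /negbTE xc]; last first.
  by rewrite !bd_deg2 xc mul0r rmorph0 mul0r.
rewrite !bd_deg2 eqxx mul1r conj_invsqrtC2 addr0.
have [->|cb] := eqVneq c b; first by rewrite !eqxx mul1r half subrr.
by case: (tv c == tv b); rewrite ?mul1r ?mul0r ?mulr0 ?half subr0.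
Qed.

Lemma PST_vstate_perm (f : A -> A) :
    (forall a b, Ugrover a b = (b == f a)%:R) ->
  forall x y t, PST (vstate adj x) (vstate adj y) t <->
    (0 < t)%N /\ forall a, (x == tv (iter t f a)) = (y == tv a).
Proof.
move=> Uf x y t; rewrite /PST; split=> [[t_gt0 [g [g1 Eg]]] | [t_gt0 Ef]].
  split=> // a; move: (Eg a); rewrite (evolve_perm Uf) !vstate_deg2.
  have k0 := invsqrtC2_neq0.
  case: (x == _); case: (y == _); rewrite ?mul1r ?mul0r ?mulr0 ?mulr1 //.
    by move/eqP; rewrite (negbTE k0).
  move/esym/eqP; rewrite mulf_eq0 (negbTE k0) orbF => /eqP g0.
  by move: g1; rewrite g0 normr0 => /eqP; rewrite eq_sym oner_eq0.
split=> //; exists 1; split=> [|a]; first exact: normr1.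
by rewrite (evolve_perm Uf) !vstate_deg2 Ef mul1r.
Qed.

End GroverWalk.

Section Cycle.
Variable m : nat.
Local Notation N := m.+3.
Local Notation Z := 'Z_N.
Local Notation C := (cycle_graph N).
Local Notation A := (Defs.arc C).

Lemma cycle_graphE (u w : Z) : C u w = (w - u == 1) || (w - u == -1).
Proof. by []. Qed.

Lemma cycle_graph_sym : symmetric C.
Proof. by move=> u w; rewrite !cycle_graphE -[u - w]opprB !eqr_oppLR opprK orbC. Qed.

Lemma deg_cycle (x : Z) : deg C x = 2%N.
Proof.
rewrite /deg (_ : [set y | C x y] = [set x + 1; x - 1]).
  by rewrite cards2 (can_eq (addKr x)) Zp_oner_neqN1.
by apply/setP => y; rewrite !inE cycle_graphE !subr_eq ![_ + x]addrC.
Qed.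

Lemma pm1_neqN (s t : Z) : (s == 1) || (s == -1) -> (t == 1) || (t == -1) ->
  (t != - s) = (t == s).
Proof.
have one_m1 := Zp_oner_neqN1 (isT : (2 < N)%N).
by move=> /orP[]/eqP-> /orP[]/eqP->;
  rewrite ?opprK ?eqxx // ?(negbTE one_m1) // eq_sym (negbTE one_m1).
Qed.

Definition arc_dir (a : A) : Z := tv a - (val a).1.

Lemma arc_dir_pm1 (a : A) : (arc_dir a == 1) || (arc_dir a == -1).
Proof. exact: (valP a). Qed.

Lemma cycle_graph_back (a : A) : C ((val a).1 - arc_dir a) (val a).1.
Proof. by rewrite cycle_graphE opprB addrC subrK arc_dir_pm1. Qed.

Definition arc_back (a : A) : A :=
  exist _ ((val a).1 - arc_dir a, (val a).1) (cycle_graph_back a).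

Lemma Ugrover_cycle (a b : A) : Ugrover a b = (b == arc_back a)%:R.
Proof.
rewrite (Ugrover_rev cycle_graph_sym) (coin_deg2 deg_cycle); congr (nat_of_bool _)%:R.
rewrite -[_ == b]val_eqE -[_ == arc_back a]val_eqE.
case: a b => [[u w] uw] [[v z] vz]; rewrite /= /arc_dir /tv /= !xpair_eqE.
rewrite /= !cycle_graphE in uw vz.
case: (eqVneq u z) vz => [<- vz|_ _]; last by rewrite !andbF.
have wv : (w == v) = (w - u == - (u - v)) by rewrite opprB (can_eq (subrK u)).
have vb : (v == u - (w - u)) = (u - v == w - u) by rewrite eq_sym subr_eq addrC -subr_eq.
by rewrite !andbT /= wv vb pm1_neqN.
Qed.

Lemma tv_back (a : A) : tv (arc_back a) = tv a - arc_dir a.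
Proof. by rewrite /arc_dir opprB addrC subrK. Qed.

Lemma arc_dir_back (a : A) : arc_dir (arc_back a) = arc_dir a.
Proof. by rewrite [LHS]/arc_dir subKr. Qed.

Lemma tv_iter_back t (a : A) :
  tv (iter t arc_back a) = tv a - t%:R * arc_dir a.
Proof.
elim: t a => [|t IH] a; first by rewrite mul0r subr0.
by rewrite iterSr IH tv_back arc_dir_back -natr1; ring.
Qed.

Lemma cycle_graph_into (y s : Z) : (s == 1) || (s == -1) -> C (y - s) y.
Proof. by rewrite cycle_graphE subKr. Qed.

Lemma arc_dir_into (y s : Z) (h : C (y - s) y) :
  arc_dir (exist _ (y - s, y) h) = s.
Proof. exact: subKr. Qed.

Lemma PST_cycleP (x y : Z) t :
  PST (vstate C x) (vstate C y) t <->
  (0 < t)%N /\ y = x + t%:R /\ y = x - t%:R.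
Proof.
rewrite (PST_vstate_perm deg_cycle Ugrover_cycle); split=> -[t_gt0 H]; split=> //.
  have xE s (s_pm1 : (s == 1) || (s == -1)) : x = y - t%:R * s.
    have := H (exist _ (y - s, y) (cycle_graph_into y s_pm1)).
    by rewrite tv_iter_back arc_dir_into eqxx => /eqP.
  split; first by rewrite (xE 1) ?eqxx // mulr1 subrK.
  by rewrite (xE (-1)) ?eqxx ?orbT // mulrN1 opprK addrK.
case: H => yp ym a; rewrite tv_iter_back.
case/orP: (arc_dir_pm1 a) => /eqP->.
  by rewrite mulr1 eq_sym subr_eq -yp eq_sym.
by rewrite mulrN1 opprK -subr_eq -ym.
Qed.

End Cycle.

Theorem theorem5p1 (n : nat) (hn : (3 <= n)%N) :
  (odd n ->
     forall (x y : 'Z_n) (tau : nat), x != y ->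
       ~ PST (vstate (cycle_graph n) x) (vstate (cycle_graph n) y) tau) /\
  (forall l : nat, n = (l.*2)%N ->
     forall x : 'Z_n,
       PST (vstate (cycle_graph n) x) (vstate (cycle_graph n) (x + l%:R)) l /\
       (forall tau : nat, (tau < l)%N ->
          ~ PST (vstate (cycle_graph n) x) (vstate (cycle_graph n) (x + l%:R)) tau)).
Proof.
case: n hn => [|[|[|m]]] // _; split.
  move=> odd_n x y t xy /PST_cycleP [_ [yp ym]].
  have : (t.*2)%:R == 0 :> 'Z_m.+3.
    have -> : (t.*2)%:R = (x + t%:R) - (x - t%:R) :> 'Z_m.+3.
      by rewrite -addnn natrD; ring.
    by rewrite -yp -ym subrr.
  rewrite Zp_nat_eq0 // -muln2 Gauss_dvdl ?coprimen2 // -Zp_nat_eq0 // => /eqP t0.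
  by rewrite yp t0 addr0 eqxx in xy.
move=> l n_2l x; split.
  apply/PST_cycleP; split; first lia; split=> //.
  have ll : l%:R + l%:R = 0 :> 'Z_m.+3.
    by apply/eqP; rewrite -natrD addnn -n_2l Zp_nat_eq0.
  by apply/eqP; rewrite eq_sym subr_eq -addrA ll addr0.
move=> t lt_tl /PST_cycleP [_ [yp _]].
have : (l - t)%:R == 0 :> 'Z_m.+3 by rewrite natrB ?(ltnW lt_tl) // (addrI _ yp) subrr.
rewrite Zp_nat_eq0 // => /dvdn_leq; lia.
Qed.
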